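(* There is a non-separable closed subspace of $BV[0,1]$ contained in $\mathcal{F}\cup\{0\}$.
   Context: $BV[0,1]$ is the Banach space of real-valued, left-continuous functions of bounded variation on $[0,1]$ with norm $\|f\|=|f(0)|+V(f)$, where $V(f)$ is the total variation of $f$ on $[0,1]$. $\mathcal{F}$ is the set of functions of bounded variation on $[0,1]$ whose set of jump discontinuities is dense in $[0,1]$. *)

From HB Require Import structures.
From mathcomp Require Import all_boot all_order all_algebra.
From mathcomp Require Import all_classical all_reals all_analysis.
Set Implicit Arguments. Unset Strict Implicit. Unset Printing Implicit Defensive.
Import Order.TTheory GRing.Theory Num.Theory.
Import numFieldNormedType.Exports.
Local Open Scope classical_set_scope.
Local Open Scope ring_scope.

(* Functions are R -> R; only their values on [0,1] matter. *)

Definition left_cont01 (R : realType) (f : R -> R) : Prop :=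
  forall x : R, 0 < x -> x <= 1 -> f @ x^'- --> f x.

Definition BV01 (R : realType) : set (R -> R) :=
  [set f | left_cont01 f /\ bounded_variation 0 1 f].

Definition bvnorm (R : realType) (f : R -> R) : R :=
  `|f 0| + fine (total_variation 0 1 f).

Definition is_zero01 (R : realType) (f : R -> R) : Prop :=
  forall x : R, 0 <= x -> x <= 1 -> f x = 0.

(* jump discontinuities of f on [0,1]: points of [0,1] where f (restricted
   to [0,1]) is not continuous; for BV functions all discontinuities are jumps *)
Definition jumps01 (R : realType) (f : R -> R) : set R :=
  [set x : R | 0 <= x <= 1 /\
     ~ (f @ within (fun y : R => 0 <= y <= 1) (nbhs x) --> f x)].

Definition dense01 (R : realType) (A : set R) : Prop :=
  forall a b : R, 0 <= a -> a < b -> b <= 1 -> exists2 x, A x & a < x < b.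

Definition classF (R : realType) : set (R -> R) :=
  [set f | bounded_variation 0 1 f /\ dense01 (jumps01 f)].

Definition bv_subspace (R : realType) (S : set (R -> R)) : Prop :=
  S `<=` @BV01 R /\ S (fun _ => 0) /\
  (forall f g, S f -> S g -> S (f \+ g)) /\
  (forall (c : R) f, S f -> S (fun x => c * f x)).

Definition bv_closed (R : realType) (S : set (R -> R)) : Prop :=
  forall f, @BV01 R f ->
    (forall e : R, 0 < e -> exists2 g, S g & bvnorm (f \- g) < e) -> S f.

Definition bv_separable (R : realType) (S : set (R -> R)) : Prop :=
  exists D : set (R -> R), [/\ countable D, D `<=` S &
    forall f, S f -> forall e : R, 0 < e -> exists2 g, D g & bvnorm (f \- g) < e].

From mathcomp Require Import all_boot all_order all_algebra.
From mathcomp Require Import all_classical all_reals all_analysis.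
From mathcomp Require Import ring lra.
Set Implicit Arguments. Unset Strict Implicit. Unset Printing Implicit Defensive.
Import Order.TTheory GRing.Theory Num.Theory.
Import numFieldNormedType.Exports.
Local Open Scope classical_set_scope.
Local Open Scope ring_scope.

(* Let g = jump_fun be a nondecreasing, left-continuous function with values in
   [0, 1] which jumps at every multiple of 1/(M+1) in [-1, 1] by at least
   jump_size M, and is right-continuous at every irrational point.  Let T be a
   set of representatives of R/Q in [0, 1) and S the closure in BV[0,1] of the
   span of the translates g(. - t), t in T.  Two distinct translates are at
   distance >= jump_size 1 / 2 (one jumps at t, the other is continuous there)
   and T is uncountable, so S is not separable.  If f in S were continuous on an
   interval of length > 1/(M+1), then for every finite combination
   h = sum c_t g(. - t) each translate has a jump of size jump_size M inside the
   interval, at distinct points where f and all other translates are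
   continuous; hence V(f - h) >= jump_size M * sum |c_t| >= jump_size M * |h|/2,
   and approximating f by such h forces f = 0. *)

Lemma near_all_seq (I : eqType) (T : Type) (F : set_system T) (s : seq I)
    (P : I -> T -> Prop) : Filter F ->
  (forall i, i \in s -> \forall x \near F, P i x) ->
  \forall x \near F, forall i, i \in s -> P i x.
Proof.
move=> FF; elim: s => [|i s IHs] Ps; first exact: nearW.
have Pst : forall j, j \in s -> \forall x \near F, P j x.
  by move=> j js; apply: Ps; rewrite inE js orbT.
apply: filterS (filterI (Ps i (mem_head i s)) (IHs Pst)) => x [Pix Psx] j.
by rewrite inE => /predU1P [->|/Psx].
Qed.

Section jump_function.
Context {R : realType}.

(* Level m jumps by jump_size m at each point of the grid of mesh 1/(m+1) in
   [-1, 1], which contains x - t for x in [0, 1] and t in [0, 1); its total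
   mass is 2^-(m+1), so the levels sum to at most 1. *)
Definition level_size (m : nat) : nat := (2 * m + 3)%N.

Definition jump_point (m p : nat) : R := (p%:R - m.+1%:R) / m.+1%:R.

Definition jump_size (m : nat) : R := 2 ^- m.+1 / (level_size m)%:R.

Definition level (m : nat) (x : R) : R :=
  \sum_(p < level_size m) jump_size m * ((jump_point m p < x)%R : nat)%:R.

Definition partial_jump (N : nat) (x : R) : R := \sum_(0 <= m < N) level m x.

Definition jump_fun (x : R) : R := sup (range (partial_jump ^~ x)).

Definition jump_points (N : nat) : seq R :=
  [seq jump_point m p | m <- iota 0 N, p <- iota 0 (level_size m)].

Definition rational (x : R) : Prop := exists r : rat, x = ratr r.

Lemma rationalD x y : rational x -> rational y -> rational (x + y).
Proof. by move=> [r ->] [s ->]; exists (r + s); rewrite rmorphD. Qed.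

Lemma rationalB x y : rational x -> rational y -> rational (x - y).
Proof. by move=> [r ->] [s ->]; exists (r - s); rewrite rmorphB. Qed.

Lemma rational_jump_point m p : rational (jump_point m p).
Proof.
exists ((p%:R - m.+1%:R) / m.+1%:R).
by rewrite /jump_point fmorph_div rmorphB !rmorph_nat.
Qed.

Lemma rational_jump_points N c : c \in jump_points N -> rational c.
Proof. by move=> /allpairsPdep [m [p [_ _ ->]]]; exact: rational_jump_point. Qed.

Lemma mem_jump_points N m p : (m < N)%N -> (p < level_size m)%N ->
  jump_point m p \in jump_points N.
Proof. by move=> mN pm; apply/allpairsPdep; exists m, p; rewrite !mem_iota. Qed.

Lemma jump_size_gt0 m : 0 < jump_size m.
Proof. by rewrite divr_gt0 ?invr_gt0 ?exprn_gt0 // ltr0n /level_size addn3. Qed.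

Lemma level_ge0 m x : 0 <= level m x.
Proof. by apply: sumr_ge0 => p _; rewrite mulr_ge0 ?ler0n ?ltW ?jump_size_gt0. Qed.

Lemma level_le m x : level m x <= 2 ^- m.+1.
Proof.
apply: (@le_trans _ _ (\sum_(p < level_size m) jump_size m)).
  apply: ler_sum => p _; apply: ler_piMr; first exact/ltW/jump_size_gt0.
  by case: (_ < _)%R; rewrite ?ler01.
rewrite sumr_const card_ord /jump_size -[X in X <= _]mulr_natr divfK //.
by rewrite pnatr_eq0 /level_size addn3.
Qed.

Lemma indicator_lt_homo (c z x : R) : z <= x ->
  ((c < z)%R : nat)%:R <= ((c < x)%R : nat)%:R :> R.
Proof. by move=> zx; rewrite ler_nat; case: ltP => //= cz; rewrite (lt_le_trans cz zx). Qed.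

Lemma level_homo m : {homo level m : x y / x <= y}.
Proof.
move=> x y xy; apply: ler_sum => p _; apply: ler_wpM2l; first exact/ltW/jump_size_gt0.
exact: indicator_lt_homo.
Qed.

Lemma expr2V_halve N : (2 : R) ^- N = 2 ^- N.+1 + 2 ^- N.+1.
Proof. by rewrite exprS; field; rewrite expf_neq0. Qed.

Lemma sum_expr2V N M : (N <= M)%N ->
  \sum_(N <= m < M) (2 : R) ^- m.+1 = 2 ^- N - 2 ^- M.
Proof.
elim: M => [|M IHM]; first by rewrite leqn0 => /eqP ->; rewrite big_geq // subrr.
rewrite leq_eqVlt => /predU1P [->|]; first by rewrite big_geq // subrr.
by rewrite ltnS => NM; rewrite big_nat_recr //= IHM // [2 ^- M]expr2V_halve; lra.
Qed.

Lemma expr2V_small (e : R) m : 0 < e -> exists2 N, (m < N)%N & 2 ^- N < e.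
Proof.
move=> e0; set N := maxn m.+1 (Num.truncn e^-1).+1.
exists N; first by rewrite leq_max leqnn.
rewrite -[e]invrK ltf_pV2 ?posrE ?exprn_gt0 ?invr_gt0 //.
apply: lt_le_trans (truncnS_gt _) _; rewrite -natrX ler_nat.
exact: leq_trans (leq_maxr m.+1 _) (ltnW (ltn_expl _ (isT : (1 < 2)%N))).
Qed.

Lemma level_tail_ge0 N M x : 0 <= \sum_(N <= m < M) level m x.
Proof. by apply: sumr_ge0 => m _; exact: level_ge0. Qed.

Lemma level_tail_le N M x : \sum_(N <= m < M) level m x <= 2 ^- N.
Proof.
have [NM|/ltnW MN] := leqP N M; last by rewrite big_geq // invr_ge0 exprn_ge0.
apply: le_trans (_ : \sum_(N <= m < M) 2 ^- m.+1 <= _).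
  by apply: ler_sum => m _; exact: level_le.
by rewrite sum_expr2V // gerBl invr_ge0 exprn_ge0.
Qed.

Lemma partial_jump_split N M x : (N <= M)%N ->
  partial_jump M x = partial_jump N x + \sum_(N <= m < M) level m x.
Proof. by move=> NM; rewrite /partial_jump (big_cat_nat (leq0n N) NM). Qed.

Lemma partial_jump_ge0 N x : 0 <= partial_jump N x.
Proof. exact: level_tail_ge0. Qed.

Lemma partial_jump_le1 N x : partial_jump N x <= 1.
Proof. by have := level_tail_le 0 N x; rewrite expr0 invr1. Qed.

Lemma partial_jump_tail N M x : partial_jump M x <= partial_jump N x + 2 ^- N.
Proof.
have [NM|/ltnW MN] := leqP N M; first by rewrite (partial_jump_split x NM) lerD2l level_tail_le.
rewrite (partial_jump_split x MN) -addrA lerDl.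
by rewrite addr_ge0 ?level_tail_ge0 // invr_ge0 exprn_ge0.
Qed.

Lemma has_sup_partial_jump x : has_sup (range (partial_jump ^~ x)).
Proof.
split; first by exists (partial_jump 0 x), 0%N.
by exists 1 => _ [N _ <-]; exact: partial_jump_le1.
Qed.

Lemma jump_fun_ge N x : partial_jump N x <= jump_fun x.
Proof. by apply: sup_upper_bound; [exact: has_sup_partial_jump | exists N]. Qed.

Lemma jump_fun_le N x : jump_fun x <= partial_jump N x + 2 ^- N.
Proof.
apply: ge_sup; first by exists (partial_jump 0 x), 0%N.
by move=> _ [M _ <-]; exact: partial_jump_tail.
Qed.

Lemma jump_fun_ge0 x : 0 <= jump_fun x.
Proof. exact: le_trans (partial_jump_ge0 0 x) (jump_fun_ge 0 x). Qed.

Lemma jump_fun_le1 x : jump_fun x <= 1.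
Proof. by have := jump_fun_le 0 x; rewrite expr0 invr1 /partial_jump big_geq // add0r. Qed.

Lemma jump_fun_homo : {homo jump_fun : x y / x <= y}.
Proof.
move=> x y xy; apply: ge_sup; first by exists (partial_jump 0 x), 0%N.
move=> _ [N _ <-]; apply: le_trans (jump_fun_ge N y).
by apply: ler_sum => m _; exact: level_homo.
Qed.

Lemma partial_jump_jump N m p z x : (m < N)%N -> (p < level_size m)%N ->
  z <= jump_point m p < x -> jump_size m <= partial_jump N x - partial_jump N z.
Proof.
move=> mN pm /andP [zp px]; have zx := le_trans zp (ltW px).
rewrite /partial_jump -sumrB big_mkord (bigD1 (Ordinal mN)) //=.
apply: le_trans (_ : level m x - level m z <= _); last first.
  by rewrite lerDl; apply: sumr_ge0 => i _; rewrite subr_ge0; exact: level_homo.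
rewrite /level -sumrB (bigD1 (Ordinal pm)) //= px.
have -> : (jump_point m p < z) = false by rewrite ltNge zp.
rewrite mulr1 mulr0 subr0 lerDl; apply: sumr_ge0 => i _; rewrite -mulrBr.
by apply: mulr_ge0; [exact/ltW/jump_size_gt0 | rewrite subr_ge0; exact: indicator_lt_homo].
Qed.

Lemma jump_fun_jump m p z x : (p < level_size m)%N ->
  z <= jump_point m p < x -> jump_size m <= jump_fun x - jump_fun z.
Proof.
move=> pm zpx; apply/ler_addgt0Pr => e e0; have [N mN small] := expr2V_small m e0.
have := partial_jump_jump mN pm zpx; have := jump_fun_ge N x.
have := jump_fun_le N z; lra.
Qed.

Lemma partial_jump_flat N z x : z <= x ->
  (forall c, c \in jump_points N -> ~~ (z <= c < x)) ->
  partial_jump N x = partial_jump N z.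
Proof.
move=> zx avoid; rewrite /partial_jump big_nat [RHS]big_nat.
apply: eq_bigr => m /andP [_ mN]; apply: eq_bigr => p _.
have := avoid _ (mem_jump_points mN (ltn_ord p)).
case px: (jump_point m p < x); case pz: (jump_point m p < z) => //.
  by rewrite leNgt pz.
by rewrite (lt_le_trans pz zx) in px.
Qed.

Lemma jump_fun_flat N z x : z <= x ->
  (forall c, c \in jump_points N -> ~~ (z <= c < x)) ->
  jump_fun x - jump_fun z <= 2 ^- N.
Proof.
move=> zx avoid; have := partial_jump_flat zx avoid.
have := jump_fun_le N x; have := jump_fun_ge N z; lra.
Qed.

Lemma jump_fun_shift_left_cont (t x : R) :
  jump_fun (y - t) @[y --> x^'-] --> jump_fun (x - t).
Proof.
apply/cvgrPdist_lt => e e0; have [N _ small] := expr2V_small 0 e0.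
near=> y.
have yx : y < x by near: y; exact: nbhs_left_lt.
rewrite ger0_norm; last by rewrite subr_ge0; apply: jump_fun_homo; rewrite lerD2r ltW.
apply: le_lt_trans small; apply: jump_fun_flat; first by rewrite lerD2r ltW.
near: y; apply: near_all_seq => c _.
have [cx|xc] := ltP c (x - t).
  have : \forall y \near x^'-, c + t < y by apply: nbhs_left_gt; rewrite -ltrBrDr.
  by apply: filterS => y cy; apply/negP => /andP [yc _]; lra.
by apply: nearW => y; apply/negP => /andP [_ cx]; lra.
Unshelve. all: by end_near.
Qed.

Lemma jump_fun_right_cont (u : R) : ~ rational u ->
  jump_fun (u + d) @[d --> 0^'+] --> jump_fun u.
Proof.
move=> irr_u; apply/cvgrPdist_lt => e e0; have [N _ small] := expr2V_small 0 e0.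
near=> d.
have d0 : 0 < d by near: d; exact: nbhs_right_gt.
rewrite distrC ger0_norm; last by rewrite subr_ge0; apply: jump_fun_homo; rewrite lerDl ltW.
apply: le_lt_trans small; apply: jump_fun_flat; first by rewrite lerDl ltW.
near: d; apply: near_all_seq => c cN.
have cu : c != u by apply: contra_not_neq irr_u => <-; exact: rational_jump_points cN.
have [uc|cu'] := ltP u c.
  have : \forall d \near 0^'+, d < c - u by apply: nbhs_right_lt; rewrite subr_gt0.
  by apply: filterS => d dc; apply/negP => /andP [_ cd]; lra.
have {cu'}c_lt_u : c < u by rewrite lt_neqAle cu.
by apply: nearW => d; apply/negP => /andP [uc _]; lra.
Unshelve. all: by end_near.
Qed.

End jump_function.

Section variation.
Context {R : realType}.
Implicit Types (a b c : R) (f g : R -> R).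
Local Notation BV := bounded_variation.
Local Notation TV := total_variation.

Lemma variationZ a b f c s :
  variation a b (fun x => c * f x) s = `|c| * variation a b f s.
Proof. by rewrite /variation mulr_sumr; apply: eq_bigr => k _; rewrite -mulrBr normrM. Qed.

Lemma bounded_variationZ a b f c : BV a b f -> BV a b (fun x => c * f x).
Proof.
move=> [M fM]; exists (`|c| * M) => _ [l abl <-].
by rewrite variationZ ler_wpM2l //; apply: fM; exists l.
Qed.

Lemma total_variationZ_le a b f c :
  (TV a b (fun x => (c * f x)%R) <= `|c|%:E * TV a b f)%E.
Proof.
apply: ge_ereal_sup => _ [_ [l abl <-] <-].
rewrite variationZ EFinM lee_pmul ?lee_fin ?variation_ge0 //.
by apply: ereal_sup_ubound; exists (variation a b f l) => //; exists l.
Qed.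

Lemma total_variation_ge_sum_sorted f (s : seq R) d a b : 0 < d -> a <= b ->
  (forall y, y \in s -> a <= y /\ y + d <= b) ->
  pairwise (fun y z => y + d <= z) s ->
  ((\sum_(y <- s) `|f (y + d) - f y|)%:E <= TV a b f)%E.
Proof.
move=> d0; elim: s a => [|y s IHs] a ab s_ab; first by rewrite big_nil total_variation_ge0.
rewrite pairwise_cons => /andP [/allP y_s s_sep].
have [ay ydb] := s_ab y (mem_head y s); have yb : y <= b by lra.
have yyd : y <= y + d by lra.
rewrite (total_variationD f ay yb) (total_variationD f yyd ydb) big_cons EFinD.
apply: le_trans (leeDr _ (total_variation_ge0 f ay)).
apply: leeD; first exact: total_variation_ge.
apply: IHs => // z zs; split; first exact: y_s.
have zys : z \in y :: s by rewrite inE zs orbT.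
by have [] := s_ab z zys.
Qed.

Lemma sorted_pairwise_sep (s : seq R) d : sorted <=%R s -> uniq s ->
  (forall y z, y \in s -> z \in s -> y != z -> y + d <= z \/ z + d <= y) ->
  pairwise (fun y z => y + d <= z) s.
Proof.
elim: s => [//|y s IHs] /= s_sorted /andP [ys s_uniq] s_sep.
apply/andP; split; last first.
  apply: IHs => //; first exact: path_sorted s_sorted.
  by move=> z w zs ws; apply: s_sep; rewrite inE ?zs ?ws orbT.
have /allP y_min := order_path_min le_trans s_sorted.
apply/allP => z zs; have yz := y_min z zs.
have y_neq_z : y != z by apply: contraNneq ys => ->.
have zys : z \in y :: s by rewrite inE zs orbT.
by case: (s_sep y z (mem_head y s) zys y_neq_z) => //; lra.
Qed.

Lemma total_variation_ge_sum f (s : seq R) d a b : 0 < d -> a <= b -> uniq s ->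
  (forall y, y \in s -> a <= y /\ y + d <= b) ->
  (forall y z, y \in s -> z \in s -> y != z -> y + d <= z \/ z + d <= y) ->
  ((\sum_(y <- s) `|f (y + d) - f y|)%:E <= TV a b f)%E.
Proof.
move=> d0 ab s_uniq s_ab s_sep; rewrite -(perm_big _ (permEl (perm_sort <=%R s))).
apply: total_variation_ge_sum_sorted => //; first by move=> y; rewrite mem_sort; exact: s_ab.
apply: sorted_pairwise_sep; [exact: sort_le_sorted | by rewrite sort_uniq |].
by move=> y z; rewrite !mem_sort; exact: s_sep.
Qed.

Lemma bounded_variationB a b f g : a < b -> BV a b f -> BV a b g -> BV a b (f \- g).
Proof. by move=> ab bvf bvg; exact: bounded_variationD ab bvf (bounded_variationN bvg). Qed.

Definition var01 f : R := fine (TV 0 1 f).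

Lemma total_variation01E f : BV 0 1 f -> TV 0 1 f = (var01 f)%:E.
Proof. by move=> bvf; rewrite /var01 fineK //; apply/bounded_variationP. Qed.

Lemma var01_ge0 f : 0 <= var01 f.
Proof. by rewrite /var01 fine_ge0 // total_variation_ge0. Qed.

Lemma var01D f g : BV 0 1 f -> BV 0 1 g -> var01 (f \+ g) <= var01 f + var01 g.
Proof.
move=> bvf bvg; have bvfg := bounded_variationD ltr01 bvf bvg.
have := total_variation_le f g (@ler01 R).
by rewrite (total_variation01E bvf) (total_variation01E bvg) (total_variation01E bvfg).
Qed.

Lemma var01Z f c : BV 0 1 f -> var01 (fun x => c * f x) <= `|c| * var01 f.
Proof.
move=> bvf; have := total_variationZ_le 0 1 f c.
by rewrite (total_variation01E bvf) (total_variation01E (bounded_variationZ c bvf)).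
Qed.

Lemma var01N f : var01 (\- f) = var01 f.
Proof. by rewrite /var01 total_variationN. Qed.

Lemma var01_ge_dist f x y : BV 0 1 f -> 0 <= x -> x <= y -> y <= 1 ->
  `|f y - f x| <= var01 f.
Proof.
move=> bvf x0 xy y1; have x1 := le_trans xy y1.
rewrite -lee_fin -(total_variation01E bvf) (total_variationD f x0 x1).
rewrite (total_variationD f xy y1); apply: le_trans (total_variation_ge f xy) _.
by rewrite addeCA; apply: leeDl; rewrite adde_ge0 ?total_variation_ge0.
Qed.

Lemma var01_ge_sum f (s : seq R) d : BV 0 1 f -> 0 < d -> uniq s ->
  (forall y, y \in s -> 0 <= y /\ y + d <= 1) ->
  (forall y z, y \in s -> z \in s -> y != z -> y + d <= z \/ z + d <= y) ->
  \sum_(y <- s) `|f (y + d) - f y| <= var01 f.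
Proof.
move=> bvf d0 s_uniq s01 s_sep; rewrite -lee_fin -(total_variation01E bvf).
exact: total_variation_ge_sum.
Qed.

Lemma nondecreasing_var01 f : {in `[0, 1] &, nondecreasing_fun f} ->
  BV 0 1 f /\ var01 f = f 1 - f 0.
Proof.
move=> ndf; split; first exact: nondecreasing_bounded_variation.
by rewrite /var01 nondecreasing_total_variation.
Qed.

Lemma bvnormE f : bvnorm f = `|f 0| + var01 f.
Proof. by []. Qed.

Lemma var01_le_bvnorm f : var01 f <= bvnorm f.
Proof. by rewrite bvnormE lerDr. Qed.

Lemma bvnorm_ge0 f : 0 <= bvnorm f.
Proof. by rewrite bvnormE addr_ge0 ?var01_ge0. Qed.

Lemma bvnorm0 : bvnorm (fun _ : R => 0) = 0.
Proof.
rewrite bvnormE; have [_ ->] := @nondecreasing_var01 (fun _ => 0) (fun _ _ _ _ _ => lexx 0).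
by rewrite normr0 subrr addr0.
Qed.

Lemma bvnormD f g : BV 0 1 f -> BV 0 1 g -> bvnorm (f \+ g) <= bvnorm f + bvnorm g.
Proof.
move=> bvf bvg; rewrite !bvnormE; have := var01D bvf bvg.
have := ler_normD (f 0) (g 0); rewrite /=; lra.
Qed.

Lemma bvnormN f : bvnorm (\- f) = bvnorm f.
Proof. by rewrite !bvnormE var01N normrN. Qed.

Lemma bvnormB f g : BV 0 1 f -> BV 0 1 g -> bvnorm (f \- g) <= bvnorm f + bvnorm g.
Proof.
by move=> bvf bvg; rewrite -(bvnormN g); exact: bvnormD bvf (bounded_variationN bvg).
Qed.

Lemma bvnormZ f c : BV 0 1 f -> bvnorm (fun x => c * f x) <= `|c| * bvnorm f.
Proof. by move=> bvf; rewrite !bvnormE normrM mulrDr lerD2l var01Z. Qed.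

Lemma bvnorm_ge_abs f x : BV 0 1 f -> 0 <= x -> x <= 1 -> `|f x| <= bvnorm f.
Proof.
move=> bvf x0 x1; rewrite bvnormE; have := var01_ge_dist bvf (lexx 0) x0 x1.
have := ler_normD (f 0) (f x - f 0); rewrite addrC subrK; lra.
Qed.

End variation.

Section rational_representatives.
Context {R : realType}.

(* One point of [0, 1) chosen in each coset of the rationals. *)
Definition rat_rep (x : R) : R := xget 0 [set r | 0 <= r < 1 /\ rational (r - x)].

Definition rat_reps : set R := [set t | rat_rep t = t].

Lemma rat_rep_spec x : 0 <= rat_rep x < 1 /\ rational (rat_rep x - x).
Proof.
apply: (@xgetPex _ 0 [set r | 0 <= r < 1 /\ rational (r - x)]).
exists (x - (Num.floor x)%:~R); split.
  by have := floor_itv x; rewrite intrD => /andP [xf fx]; apply/andP; split; lra.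
by exists (- (Num.floor x)%:~R); rewrite rmorphN rmorph_int; lra.
Qed.

Lemma rat_rep_eq x y : rational (x - y) -> rat_rep x = rat_rep y.
Proof.
move=> xy; rewrite /rat_rep; congr xget; apply/funext => r; apply/propext.
split=> -[r01 rat_r]; split => //.
  by rewrite (_ : r - y = (r - x) + (x - y)); [exact: rationalD | ring].
by rewrite (_ : r - x = (r - y) - (x - y)); [exact: rationalB | ring].
Qed.

Lemma rat_reps_rep x : rat_reps (rat_rep x).
Proof. by rewrite /rat_reps /=; apply: rat_rep_eq; case: (rat_rep_spec x). Qed.

Lemma rat_reps_itv t : rat_reps t -> 0 <= t < 1.
Proof. by rewrite /rat_reps /= => <-; case: (rat_rep_spec t). Qed.

Lemma rat_reps_inj t t' : rat_reps t -> rat_reps t' -> rational (t - t') -> t = t'.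
Proof. by move=> rep_t rep_t' tt'; rewrite -rep_t -rep_t'; exact: rat_rep_eq. Qed.

Lemma real_not_countable : ~ countable [set: R].
Proof.
move=> cR; have c01 : countable [set` `[(0:R), 1]%R].
  by apply: sub_countable cR; apply: subset_card_le.
have := countable_lebesgue_measure0 c01.
rewrite lebesgue_measure_itv /= lte_fin ltr01 oppr0 adde0 => /eqP.
by rewrite eqe oner_eq0.
Qed.

(* R is the union over t in rat_reps of the countable cosets t + Q. *)
Lemma rat_reps_not_countable : ~ countable rat_reps.
Proof.
move=> c_reps; apply: real_not_countable.
have : countable (\bigcup_(t in rat_reps) [set t - ratr r | r in [set: rat]]).
  apply: bigcup_countable => // t _.
  by apply: sub_countable (card_image_le _ _) _; exact: countableP.
apply: sub_countable; apply: subset_card_le => x _.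
exists (rat_rep x); first exact: rat_reps_rep.
by have [_ [r xr]] := rat_rep_spec x; exists r => //; rewrite -xr; ring.
Qed.

End rational_representatives.

Lemma big_seq_mem_sub (T : eqType) (V : nmodType) (r s : seq T) (F : T -> V) :
  uniq r -> uniq s -> {subset s <= r} ->
  \sum_(t <- r | t \in s) F t = \sum_(t <- s) F t.
Proof.
move=> r_uniq s_uniq sr; rewrite -big_filter; apply: perm_big.
apply: uniq_perm => //; first exact: filter_uniq.
by move=> t; rewrite mem_filter andb_idr // => /sr.
Qed.

Section jump_space.
Context {R : realType}.
Local Notation BV := bounded_variation.
Implicit Types (f g h : R -> R) (s : seq R) (c : R -> R).

Definition jump_comb s c (x : R) : R := \sum_(t <- s) c t * jump_fun (x - t).

Definition jump_span : set (R -> R) :=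
  [set h | exists s c, [/\ uniq s, (forall t, t \in s -> rat_reps t) & h = jump_comb s c]].

Definition jump_space : set (R -> R) :=
  [set f | BV01 f /\ forall e, 0 < e -> exists2 h, jump_span h & bvnorm (f \- h) < e].

Lemma BV01D f g : BV01 f -> BV01 g -> BV01 (f \+ g).
Proof.
move=> [lf bvf] [lg bvg]; split; last exact: bounded_variationD.
by move=> x x0 x1; apply: cvgD; [exact: lf | exact: lg].
Qed.

Lemma BV01Z f (a : R) : BV01 f -> BV01 (fun x => a * f x).
Proof.
move=> [lf bvf]; split; last exact: bounded_variationZ.
by move=> x x0 x1; apply: cvgMl_tmp; exact: lf.
Qed.

Lemma BV01_0 : BV01 (fun _ : R => 0).
Proof.
split; first by move=> x _ _; exact: cvg_cst.
exact: nondecreasing_bounded_variation (fun _ _ _ _ _ => lexx 0).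
Qed.

Lemma jump_shift_homo t : {in `[0, 1] &, nondecreasing_fun (fun x : R => jump_fun (x - t))}.
Proof. by move=> x y _ _ xy; apply: jump_fun_homo; rewrite lerD2r. Qed.

Lemma jump_shift_BV t : BV 0 1 (fun x : R => jump_fun (x - t)).
Proof. by have [] := nondecreasing_var01 (jump_shift_homo t). Qed.

Lemma var01_jump_shift t : var01 (fun x : R => jump_fun (x - t)) <= 1.
Proof.
have [_ ->] := nondecreasing_var01 (jump_shift_homo t).
by have := jump_fun_le1 (1 - t); have := jump_fun_ge0 (0 - t); lra.
Qed.

Lemma jump_comb_nil c : jump_comb [::] c = (fun _ => 0).
Proof. by apply/funext => x; rewrite /jump_comb big_nil. Qed.

Lemma jump_comb_cons t s c :
  jump_comb (t :: s) c = (fun x => c t * jump_fun (x - t)) \+ jump_comb s c.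
Proof. by apply/funext => x; rewrite /jump_comb big_cons. Qed.

Lemma jump_comb_BV01 s c : BV01 (jump_comb s c).
Proof.
elim: s => [|t s IHs]; first by rewrite jump_comb_nil; exact: BV01_0.
rewrite jump_comb_cons; apply: BV01D IHs; apply: BV01Z.
by split; [move=> x _ _; exact: jump_fun_shift_left_cont | exact: jump_shift_BV].
Qed.

Lemma jump_comb_BV s c : BV 0 1 (jump_comb s c).
Proof. by have [] := jump_comb_BV01 s c. Qed.

Lemma var01_jump_comb s c : var01 (jump_comb s c) <= \sum_(t <- s) `|c t|.
Proof.
elim: s => [|t s IHs].
  by rewrite jump_comb_nil big_nil; have := var01_le_bvnorm (fun _ : R => 0); rewrite bvnorm0.
have bv_t := bounded_variationZ (c t) (jump_shift_BV t).
rewrite jump_comb_cons big_cons; apply: le_trans (var01D bv_t (jump_comb_BV s c)) _.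
apply: lerD => //; apply: le_trans (var01Z (c t) (jump_shift_BV t)) _.
by rewrite ler_piMr // var01_jump_shift.
Qed.

Lemma bvnorm_jump_comb s c : bvnorm (jump_comb s c) <= 2 * \sum_(t <- s) `|c t|.
Proof.
have : `|jump_comb s c 0| <= \sum_(t <- s) `|c t|.
  apply: le_trans (ler_norm_sum _ _ _) _; apply: ler_sum => t _.
  by rewrite normrM ler_piMr // ger0_norm ?jump_fun_ge0 ?jump_fun_le1.
by rewrite bvnormE; have := var01_jump_comb s c; lra.
Qed.

Lemma jump_comb_increment s c x d : jump_comb s c (x + d) - jump_comb s c x =
  \sum_(t <- s) c t * (jump_fun (x - t + d) - jump_fun (x - t)).
Proof.
by rewrite /jump_comb -sumrB; apply: eq_bigr => t _; rewrite mulrBr addrAC.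
Qed.

Lemma jump_span_BV01 h : jump_span h -> BV01 h.
Proof. by move=> [s [c [_ _ ->]]]; exact: jump_comb_BV01. Qed.

Lemma jump_span_BV h : jump_span h -> BV 0 1 h.
Proof. by move=> /jump_span_BV01 []. Qed.

Lemma jump_span0 : jump_span (fun _ => 0).
Proof. by exists [::], (fun _ => 0); rewrite jump_comb_nil. Qed.

Lemma jump_span_shift t : rat_reps t -> jump_span (fun x => jump_fun (x - t)).
Proof.
move=> reps_t; exists [:: t], (fun _ => 1); split => //.
  by move=> u; rewrite inE => /eqP ->.
by apply/funext => x; rewrite /jump_comb big_seq1 mul1r.
Qed.

Lemma jump_spanZ (a : R) h : jump_span h -> jump_span (fun x => a * h x).
Proof.
move=> [s [c [s_uniq s_reps ->]]]; exists s, (fun t => a * c t); split => //.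
by apply/funext => x; rewrite /jump_comb mulr_sumr; apply: eq_bigr => t _; rewrite mulrA.
Qed.

Lemma jump_spanD h1 h2 : jump_span h1 -> jump_span h2 -> jump_span (h1 \+ h2).
Proof.
move=> [s1 [c1 [u1 reps1 ->]]] [s2 [c2 [u2 reps2 ->]]].
set r := undup (s1 ++ s2); have r_uniq : uniq r := undup_uniq _.
have sub1 : {subset s1 <= r} by move=> t ts; rewrite mem_undup mem_cat ts.
have sub2 : {subset s2 <= r} by move=> t ts; rewrite mem_undup mem_cat ts orbT.
exists r, (fun t => (if t \in s1 then c1 t else 0) + (if t \in s2 then c2 t else 0)).
split => //; first by move=> t; rewrite mem_undup mem_cat => /orP [/reps1|/reps2].
apply/funext => x; rewrite /jump_comb /=.
rewrite -(big_seq_mem_sub _ r_uniq u1 sub1) -(big_seq_mem_sub _ r_uniq u2 sub2).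
rewrite [X in X + _]big_mkcond [X in _ + X]big_mkcond -big_split /=.
apply: eq_bigr => t _; rewrite mulrDl.
by case: ifP => _; case: ifP => _; rewrite ?mul0r.
Qed.

Lemma jump_space0 : jump_space (fun _ => 0).
Proof.
split; first exact: BV01_0.
move=> e e0; exists (fun _ => 0); first exact: jump_span0.
by rewrite (_ : _ \- _ = fun _ => 0) ?bvnorm0 //; apply/funext => x /=; rewrite subrr.
Qed.

Lemma jump_spaceD f g : jump_space f -> jump_space g -> jump_space (f \+ g).
Proof.
move=> [bvf approx_f] [bvg approx_g]; split; first exact: BV01D.
move=> e e0; have e2 : 0 < e / 2 by rewrite divr_gt0.
have [hf span_hf fhf] := approx_f _ e2; have [hg span_hg ghg] := approx_g _ e2.
exists (hf \+ hg); first exact: jump_spanD.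
rewrite (_ : _ \- _ = (f \- hf) \+ (g \- hg)); last by apply/funext => x /=; ring.
apply: le_lt_trans (bvnormD _ _) _; last by lra.
  by apply: bounded_variationB ltr01 _ _; [case: bvf | exact: jump_span_BV].
by apply: bounded_variationB ltr01 _ _; [case: bvg | exact: jump_span_BV].
Qed.

Lemma jump_spaceZ (a : R) f : jump_space f -> jump_space (fun x => a * f x).
Proof.
move=> [bvf approx_f]; split; first exact: BV01Z.
move=> e e0; have a1 : 0 < `|a| + 1 by rewrite ltr_pwDr.
have [h span_h fh] := approx_f _ (divr_gt0 e0 a1).
exists (fun x => a * h x); first exact: jump_spanZ.
rewrite (_ : _ \- _ = (fun x => a * (f \- h) x)); last by apply/funext => x /=; ring.
have bv_fh : BV 0 1 (f \- h).
  by apply: bounded_variationB ltr01 _ _; [case: bvf | exact: jump_span_BV].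
apply: le_lt_trans (bvnormZ a bv_fh) _; move: fh; rewrite ltr_pdivlMr // => fh.
apply: le_lt_trans fh; rewrite mulrC; apply: ler_wpM2l; [exact: bvnorm_ge0 | by rewrite lerDl].
Qed.

Lemma jump_space_subspace : bv_subspace jump_space.
Proof.
split; first by move=> f [].
split; first exact: jump_space0.
by split=> [f g|a f]; [exact: jump_spaceD | exact: jump_spaceZ].
Qed.

Lemma jump_space_closed : bv_closed jump_space.
Proof.
move=> f bvf approx_f; split => // e e0; have e2 : 0 < e / 2 by rewrite divr_gt0.
have [g [bvg approx_g] fg] := approx_f _ e2; have [h span_h gh] := approx_g _ e2.
exists h => //; rewrite (_ : _ \- _ = (f \- g) \+ (g \- h)); last first.
  by apply/funext => x /=; ring.
apply: le_lt_trans (bvnormD _ _) _; last by lra.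
  by apply: bounded_variationB ltr01 _ _; [case: bvf | case: bvg].
by apply: bounded_variationB ltr01 _ _; [case: bvg | exact: jump_span_BV].
Qed.

End jump_space.

Section jump_space_not_separable.
Context {R : realType}.
Local Notation BV := bounded_variation.

Lemma jump_fun_jump0 (d : R) : 0 < d -> jump_size 1 <= jump_fun d - jump_fun 0.
Proof.
move=> d0; apply: (@jump_fun_jump R 1 2) => //.
by rewrite /jump_point subrr mul0r lexx d0.
Qed.

(* The translate by t jumps at t, where the translate by t' is right-continuous
   because t - t' is irrational. *)
Lemma bvnorm_jump_shift_sep (t t' : R) : rat_reps t -> rat_reps t' -> t <> t' ->
  jump_size 1 / 2 <= bvnorm ((fun x => jump_fun (x - t)) \- (fun x => jump_fun (x - t'))).
Proof.
move=> reps_t reps_t' tt'; have /andP [t0 t1] := rat_reps_itv reps_t.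
have irr : ~ rational (t - t') by move=> rat_tt'; apply: tt'; exact: rat_reps_inj.
have js2 : 0 < jump_size 1 / 2 :> R by rewrite divr_gt0 ?jump_size_gt0.
have : \forall d \near 0^'+, [/\ 0 < d, d < 1 - t &
    `|jump_fun (t - t') - jump_fun (t - t' + d)| < jump_size 1 / 2].
  near=> d; split.
  - by near: d; exact: nbhs_right_gt.
  - by near: d; apply: nbhs_right_lt; rewrite subr_gt0.
  - by near: d; move/cvgrPdist_lt : (jump_fun_right_cont irr); apply.
move=> /filter_ex [d [d0 dt right_t']].
set F := _ \- _.
have bvF : BV 0 1 F by apply: bounded_variationB ltr01 _ _; exact: jump_shift_BV.
have incr_F : F (t + d) - F t =
    (jump_fun d - jump_fun 0) - (jump_fun (t - t' + d) - jump_fun (t - t')).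
  rewrite /F /= subrr (_ : t + d - t = d); last by ring.
  by rewrite (_ : t + d - t' = t - t' + d); ring.
have tdt : t <= t + d by lra.
have td1 : t + d <= 1 by lra.
have := var01_ge_dist bvF t0 tdt td1; rewrite incr_F.
move: right_t'; rewrite distrC.
have := ler_norm (jump_fun (t - t' + d) - jump_fun (t - t')).
have := ler_norm (jump_fun d - jump_fun 0 - (jump_fun (t - t' + d) - jump_fun (t - t'))).
by have := jump_fun_jump0 d0; have := var01_le_bvnorm F; lra.
Unshelve. all: by end_near.
Qed.

Lemma jump_space_shift t : rat_reps t -> jump_space (fun x : R => jump_fun (x - t)).
Proof.
move=> reps_t; have span_t := jump_span_shift reps_t.
split; first exact: jump_span_BV01.
move=> e e0; exists (fun x => jump_fun (x - t)) => //.
by rewrite (_ : _ \- _ = fun _ => 0) ?bvnorm0 //; apply/funext => x /=; rewrite subrr.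
Qed.

Lemma jump_space_not_separable : ~ bv_separable (@jump_space R).
Proof.
move=> [D [cD D_sub D_dense]].
have r0 : 0 < jump_size 1 / 4 :> R by rewrite divr_gt0 ?jump_size_gt0.
pose close t d := D d /\ bvnorm ((fun x => jump_fun (x - t)) \- d) < jump_size 1 / 4.
have close_ex t : rat_reps t -> exists d, close t d.
  by move=> reps_t; have [d Dd td] := D_dense _ (jump_space_shift reps_t) _ r0; exists d.
pose phi t := xget (fun _ => 0) (close t).
have phiP t : rat_reps t -> close t (phi t) by move=> /close_ex; exact: xgetPex.
apply: rat_reps_not_countable; move/countable_injP: cD => [code code_inj].
apply/countable_injP; exists (code \o phi) => t t'; rewrite !inE => reps_t reps_t' eq_code.
have [Dt t_phi] := phiP t reps_t; have [Dt' t'_phi] := phiP t' reps_t'.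
have phi_tt' : phi t = phi t' by apply: code_inj; rewrite ?inE.
apply: contrapT => tt'; have := bvnorm_jump_shift_sep reps_t reps_t' tt'.
have bv_phi : BV 0 1 (phi t') by have [[_ ?] _] := D_sub _ Dt'.
have bv_t s : BV 0 1 ((fun x => jump_fun (x - s)) \- phi t').
  exact: bounded_variationB ltr01 (jump_shift_BV s) bv_phi.
rewrite (_ : _ \- _ = ((fun x => jump_fun (x - t)) \- phi t') \-
    ((fun x => jump_fun (x - t')) \- phi t')); last by apply/funext => x /=; ring.
have := bvnormB (bv_t t) (bv_t t'); rewrite -phi_tt' in t'_phi |- *.
by have := @jump_size_gt0 R 1; lra.
Qed.

End jump_space_not_separable.

Section jump_space_in_classF.
Context {R : realType}.
Local Notation BV := bounded_variation.

Lemma jump_pointE M p : jump_point M p = p%:R / M.+1%:R - 1 :> R.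
Proof. by rewrite /jump_point mulrBl mulfV // pnatr_eq0. Qed.

Lemma exists_jump_location M (t a b : R) : 0 <= a -> a < b -> b <= 1 ->
  0 <= t -> t < 1 -> M.+1%:R^-1 < b - a ->
  exists2 p, (p < level_size M)%N & a < t + jump_point M p < b.
Proof.
move=> a0 ab b1 t0 t1 mesh.
have ex_p : exists p, (p < level_size M)%N && (a < t + jump_point M p).
  exists (2 * M + 2)%N; rewrite /level_size ltn_add2l /= jump_pointE.
  rewrite (_ : (2 * M + 2)%:R = 2 * M.+1%:R :> R); last first.
    by rewrite natrD natrM -addn1 natrD; ring.
  by rewrite mulfK ?pnatr_eq0 //; lra.
case: (ex_minnP ex_p) => p /andP [pM ap] p_min; exists p => //; rewrite ap /=.
case: p pM ap p_min => [|q] qM aq q_min; first by move: aq; rewrite jump_pointE mul0r; lra.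
have qa : t + jump_point M q <= a.
  rewrite leNgt; apply/negP => aq'.
  by have := q_min q; rewrite (ltn_trans (ltnSn q) qM) aq' ltnn; move/(_ isT).
have step : jump_point M q.+1 = jump_point M q + M.+1%:R^-1 :> R.
  by rewrite !jump_pointE -addn1 natrD; ring.
rewrite step addrA; apply: le_lt_trans (lerD qa (lexx _)) _.
by rewrite addrC -ltrBrDr.
Qed.

Lemma dominant_term_lower_bound (s : seq R) (c G : R -> R) t (u A eta : R) :
  t \in s -> uniq s -> 0 <= A -> A <= G t ->
  (forall t', t' \in s -> t' != t -> 0 <= G t' < eta) -> `|u| < eta ->
  `|c t| * A - eta - eta * \sum_(t' <- s) `|c t'| <=
    `|u - \sum_(t' <- s) c t' * G t'|.
Proof.
move=> ts s_uniq A0 AG G_small u_small.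
rewrite [\sum_(t' <- s) c t' * G t'](bigD1_seq t) //=; set rest := \sum_(i <- s | i != t) c i * G i.
have rest_small : `|rest| <= eta * \sum_(t' <- s) `|c t'|.
  apply: le_trans (ler_norm_sum _ _ _) _.
  apply: le_trans (_ : \sum_(i <- s | i != t) eta * `|c i| <= _).
    rewrite big_seq_cond [X in _ <= X]big_seq_cond; apply: ler_sum => i /andP [i_s it].
    have /andP [Gi0 Gi] := G_small i i_s it.
    by rewrite normrM (ger0_norm Gi0) mulrC; apply: ler_wpM2r => //; exact: ltW.
  rewrite -mulr_sumr; apply: ler_wpM2l; first by have := normr_ge0 u; lra.
  by rewrite [X in _ <= X](bigD1_seq t) //= lerDr.
have main : `|c t| * A <= `|c t * G t|.
  by rewrite normrM; apply: ler_wpM2l => //; exact: le_trans AG (ler_norm _).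
have tri : `|c t * G t| <= `|u - (c t * G t + rest)| + `|u| + `|rest|.
  rewrite -[X in `|X| <= _](_ : - (u - (c t * G t + rest)) + u - rest = _); last by ring.
  apply: le_trans (ler_normB _ _) _; rewrite lerD2r.
  by apply: le_trans (ler_normD _ _) _; rewrite normrN.
lra.
Qed.

Lemma cvg_within01_at_right (f : R -> R) (y : R) : 0 <= y -> y < 1 ->
  f @ within (fun z : R => 0 <= z <= 1) (nbhs y) --> f y ->
  f (y + d) @[d --> 0^'+] --> f y.
Proof.
move=> y0 y1 /cvgrPdist_lt fy; apply/cvgrPdist_lt => e e0.
have := fy e e0; rewrite near_withinE => /nbhs_ballP [r r0 near_y].
near=> d.
have d0 : 0 < d by near: d; exact: nbhs_right_gt.
have dr : d < r by near: d; exact: nbhs_right_lt.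
have d1 : d < 1 - y by near: d; apply: nbhs_right_lt; rewrite subr_gt0.
apply: near_y; last by apply/andP; split; lra.
by rewrite -ball_normE /= opprD addrA subrr add0r normrN gtr0_norm.
Unshelve. all: by end_near.
Qed.

Lemma near_separated (ys : seq R) : \forall d \near 0^'+,
  forall y, y \in ys -> forall z, z \in ys -> y != z -> y + d <= z \/ z + d <= y.
Proof.
apply: near_all_seq => y _; apply: near_all_seq => z _.
have [->|yz] := eqVneq y z; first exact: nearW.
have : \forall d \near 0^'+, d <= `|y - z|.
  by apply: nbhs_right_le; rewrite normr_gt0 subr_eq0.
by apply: filterS => d; rewrite ler_normr => /orP [] ? _; [right | left]; lra.
Qed.

Lemma sum_const_seq (s : seq R) (x : R) : \sum_(t <- s) x = x * (size s)%:R.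
Proof. by rewrite big_const_seq count_predT iter_addr addr0 mulr_natr. Qed.

(* y t is a jump of size jump_size M of the translate by t, at which all the
   other translates are right-continuous. *)
Lemma jump_locations M (a b : R) (s : seq R) : 0 <= a -> a < b -> b <= 1 ->
  M.+1%:R^-1 < b - a -> (forall t, t \in s -> rat_reps t) ->
  exists2 y : R -> R, {in s &, injective y} & forall t, t \in s ->
    [/\ a < y t < b, exists2 p, (p < level_size M)%N & y t - t = jump_point M p &
       forall t', t' \in s -> t' != t -> ~ rational (y t - t')].
Proof.
move=> a0 ab b1 mesh s_reps.
have [p p_spec] : {p : R -> nat & forall t, t \in s ->
    (p t < level_size M)%N /\ a < t + jump_point M (p t) < b}.
  apply: (@choice _ _ (fun t n => t \in s ->
    (n < level_size M)%N /\ a < t + jump_point M n < b)) => t.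
  have [ts|_] := boolP (t \in s); last by exists 0%N.
  have /andP [t0 t1] := rat_reps_itv (s_reps t ts).
  by have [q qM atb] := exists_jump_location a0 ab b1 t0 t1 mesh; exists q.
pose y t := t + jump_point M (p t).
have irr_y t t' : t \in s -> t' \in s -> t' != t -> ~ rational (y t - t').
  move=> ts t's t't rat_y; move/eqP: t't; apply; apply: esym.
  apply: rat_reps_inj (s_reps t ts) (s_reps t' t's) _.
  rewrite (_ : t - t' = (y t - t') - jump_point M (p t)); last by rewrite /y; ring.
  exact: rationalB rat_y (rational_jump_point _ _).
exists y => [t t' ts t's yt|t ts].
  have [->//|t't] := eqVneq t' t; exfalso; apply: (irr_y t t' ts t's t't).
  by rewrite yt /y addrAC subrr add0r; exact: rational_jump_point.
have [pM atb] := p_spec t ts; split => //; last by move=> t' t's; exact: irr_y.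
by exists (p t) => //; rewrite /y; ring.
Qed.

Lemma var01_ge_jump_comb_approx (f : R -> R) (a b : R) M (s : seq R) (c : R -> R)
    (eta : R) : 0 <= a -> a < b -> b <= 1 -> M.+1%:R^-1 < b - a ->
  uniq s -> (forall t, t \in s -> rat_reps t) -> BV 0 1 f ->
  (forall y, a < y < b -> f @ within (fun z : R => 0 <= z <= 1) (nbhs y) --> f y) ->
  0 < eta ->
  \sum_(t <- s) (`|c t| * jump_size M - eta - eta * \sum_(t' <- s) `|c t'|) <=
    var01 (f \- jump_comb s c).
Proof.
move=> a0 ab b1 mesh s_uniq s_reps bvf f_cont eta0.
have [y y_inj y_spec] := jump_locations a0 ab b1 mesh s_reps.
have : \forall d \near 0^'+, [/\ 0 < d, forall z, z \in map y s ->
      forall z', z' \in map y s -> z != z' -> z + d <= z' \/ z' + d <= z &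
    forall t, t \in s ->
    [/\ y t + d <= 1, `|f (y t) - f (y t + d)| < eta &
      forall t', t' \in s -> t' != t ->
        `|jump_fun (y t - t') - jump_fun (y t - t' + d)| < eta]].
  near=> d; split; first by near: d; exact: nbhs_right_gt.
    by near: d; exact: near_separated.
  near: d; apply: near_all_seq => t ts; have [ytab _ irr_y] := y_spec t ts.
  have /andP [a_yt yt_b] := ytab.
  have yt0 : 0 <= y t by lra.
  have yt1 : y t < 1 by lra.
  near=> d; split.
  - have : d <= 1 - y t by near: d; apply: nbhs_right_le; rewrite subr_gt0.
    by lra.
  - near: d; move/cvgrPdist_lt: (cvg_within01_at_right yt0 yt1 (f_cont _ ytab)).
    exact.
  - near: d; apply: near_all_seq => t' t's; have [->|t't] := eqVneq t' t.
      exact: nearW.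
    move/cvgrPdist_lt: (jump_fun_right_cont (irr_y t' t's t't)) => /(_ _ eta0).
    by apply: filterS => d small _.
move=> /filter_ex [d [d0 sep_d small_d]].

set F := f \- jump_comb s c; set K := \sum_(t' <- s) `|c t'|.
have bvF : BV 0 1 F := bounded_variationB ltr01 bvf (jump_comb_BV s c).
apply: le_trans (_ : \sum_(t <- s) `|F (y t + d) - F (y t)| <= _); last first.
  rewrite -(big_map y xpredT (fun z => `|F (z + d) - F z|)).
  apply: var01_ge_sum bvF d0 _ _ _; first by rewrite map_inj_in_uniq.
    move=> _ /mapP [t ts ->]; have [/andP [a_yt _] _ _] := y_spec t ts.
    by have [yt1 _ _] := small_d t ts; split; lra.
  by move=> z z' zs z's; exact: sep_d.
rewrite big_seq [X in _ <= X]big_seq; apply: ler_sum => t ts.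
have [_ [p pM ytp] _] := y_spec t ts; have [_ f_small g_small] := small_d t ts.
have -> : F (y t + d) - F (y t) = (f (y t + d) - f (y t)) -
    \sum_(t' <- s) c t' * (jump_fun (y t - t' + d) - jump_fun (y t - t')).
  by rewrite -jump_comb_increment /F /=; ring.
apply: dominant_term_lower_bound ts s_uniq _ _ _ _.
- exact/ltW/jump_size_gt0.
- by rewrite ytp; apply: jump_fun_jump pM _; rewrite lexx ltrDl d0.
- move=> t' t's t't; apply/andP; split.
    by rewrite subr_ge0; apply: jump_fun_homo; rewrite lerDl ltW.
  by apply: ltr_normlW; rewrite distrC; exact: g_small.
- by rewrite distrC.
Unshelve. all: by end_near.
Qed.

Lemma var01_ge_jump_comb (f : R -> R) (a b : R) M (s : seq R) (c : R -> R) :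
  0 <= a -> a < b -> b <= 1 -> M.+1%:R^-1 < b - a ->
  uniq s -> (forall t, t \in s -> rat_reps t) -> BV 0 1 f ->
  (forall y, a < y < b -> f @ within (fun z : R => 0 <= z <= 1) (nbhs y) --> f y) ->
  jump_size M * \sum_(t <- s) `|c t| <= var01 (f \- jump_comb s c).
Proof.
move=> a0 ab b1 mesh s_uniq s_reps bvf f_cont.
set K := \sum_(t <- s) `|c t|; set n : R := (size s)%:R.
have K0 : 0 <= K by apply: sumr_ge0.
have n0 : 0 <= n by rewrite ler0n.
apply/ler_addgt0Pr => e e0.
have nK : 0 < n * (1 + K) + 1 by rewrite ltr_pwDr // mulr_ge0 // addr_ge0.
set eta := e / (n * (1 + K) + 1); have eta0 : 0 < eta by rewrite divr_gt0.
have := var01_ge_jump_comb_approx c a0 ab b1 mesh s_uniq s_reps bvf f_cont eta0.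
have -> : \sum_(t <- s) (`|c t| * jump_size M - eta - eta * K) =
    jump_size M * K - (eta + eta * K) * n.
  by rewrite !sumrB !sum_const_seq -mulr_suml /K /n; ring.
have : (eta + eta * K) * n <= e.
  rewrite (_ : _ * n = eta * (n * (1 + K))); last by ring.
  rewrite /eta mulrAC ler_pdivrMr //; apply: ler_wpM2l; first exact: ltW.
  by rewrite lerDl.
lra.
Qed.

(* If f in the closure of the span were continuous on an interval, the lower
   bound var01 (f - h) >= jump_size M * (sum of |coefficients of h|) would make
   the approximants h small together with f - h, hence f = 0. *)
Lemma jump_space_zero_of_continuous (f : R -> R) (a b : R) :
  jump_space f -> 0 <= a -> a < b -> b <= 1 ->
  (forall y, a < y < b -> f @ within (fun z : R => 0 <= z <= 1) (nbhs y) --> f y) ->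
  is_zero01 f.
Proof.
move=> [[_ bvf] approx_f] a0 ab b1 f_cont.
set M := Num.truncn (b - a)^-1.
have mesh : M.+1%:R^-1 < b - a.
  rewrite -[X in _ < X]invrK ltf_pV2 ?posrE ?ltr0n ?invr_gt0 ?subr_gt0 //.
  exact: truncnS_gt.
have jsM := @jump_size_gt0 R M.
move=> x x0 x1; apply/eqP; rewrite -normr_le0; apply/ler_addgt0Pr => e e0.
set C : R := 1 + 2 / jump_size M.
have C0 : 0 < C by apply: addr_gt0 => //; rewrite divr_gt0.
have [h [s [c [s_uniq s_reps ->]]] fh] := approx_f _ (divr_gt0 e0 C0).
have bv_fh : BV 0 1 (f \- jump_comb s c) := bounded_variationB ltr01 bvf (jump_comb_BV s c).
have lower := var01_ge_jump_comb c a0 ab b1 mesh s_uniq s_reps bvf f_cont.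
have fx : `|f x| <= bvnorm (f \- jump_comb s c) + bvnorm (jump_comb s c).
  apply: le_trans (bvnorm_ge_abs bvf x0 x1) _.
  rewrite {1}(_ : f = (f \- jump_comb s c) \+ jump_comb s c); last first.
    by apply/funext => z /=; rewrite subrK.
  exact: bvnormD bv_fh (jump_comb_BV s c).
have K_le : \sum_(t <- s) `|c t| <= bvnorm (f \- jump_comb s c) / jump_size M.
  rewrite ler_pdivlMr // mulrC; apply: le_trans lower _; exact: var01_le_bvnorm.
move: fh; rewrite ltr_pdivlMr // => fh.
have := bvnorm_jump_comb s c; rewrite add0r.
move: fx K_le fh; rewrite /C; set u := bvnorm _; set K := \sum_(t <- s) _ => fx K_le fh cK.
have : 2 * K <= 2 / jump_size M * u.
  by rewrite mulrAC -mulrA; apply: ler_wpM2l => //; rewrite mulrC.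
lra.
Qed.

Lemma jump_space_classF (f : R -> R) : jump_space f -> classF f \/ is_zero01 f.
Proof.
move=> space_f; have [[_ bvf] _] := space_f.
have [[a [b [a0 ab b1 no_jump]]]|dense] := pselect (exists a b : R,
    [/\ 0 <= a, a < b, b <= 1 & forall x, a < x < b -> ~ jumps01 f x]).
  right; apply: (jump_space_zero_of_continuous space_f a0 ab b1) => y /andP [ay yb].
  apply: contrapT => y_jump; apply: (no_jump y); first by rewrite ay yb.
  by split => //; apply/andP; split; lra.
left; split => // a b a0 ab b1; apply: contrapT => no_x; apply: dense.
by exists a, b; split => // x ax x_jump; apply: no_x; exists x.
Qed.

End jump_space_in_classF.

Theorem mainTheorem6 (R : realType) :
  exists S : set (R -> R),
    [/\ bv_subspace S, bv_closed S, ~ bv_separable S &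
        forall f, S f -> classF f \/ is_zero01 f].
Proof.
exists (@jump_space R); split.
- exact: jump_space_subspace.
- exact: jump_space_closed.
- exact: jump_space_not_separable.
- exact: jump_space_classF.
Qed.
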